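(* Let $\mathcal H$ be a complex Hilbert space and $A,X,B\in\mathcal B(\mathcal H)$ with $X$ positive. Then for all $x,y\in\mathcal H$ with $Bx\neq0$, $$|\langle AXBx,y\rangle|\le\frac{\|X\|}{2}\left(2\|Bx\|\,\|A^*y\|-\frac{\inf_{\lambda\in\mathbb C}\|Bx-\lambda A^*y\|^2}{2\|Bx\|}\,\|A^*y\|\right).$$
   Context: $\|X\|$ is the operator norm. *)

From HB Require Import structures.
From mathcomp Require Import all_boot all_order all_algebra.
From mathcomp Require Import all_classical reals.
From mathcomp Require Import complex.
Set Implicit Arguments. Unset Strict Implicit. Unset Printing Implicit Defensive.
Import Order.TTheory GRing.Theory Num.Theory.
Local Open Scope ring_scope.
Local Open Scope classical_set_scope.

Section HilbertDefs.
Variables (R : realType) (V : lmodType R[i]) (ip : V -> V -> R[i]).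

Definition is_inner_product : Prop :=
  [/\ (forall (a : R[i]) (x y z : V), ip (a *: x + y) z = a * ip x z + ip y z),
      (forall x y : V, ip x y = conjc (ip y x)),
      (forall x : V, 0 <= ip x x) &
      (forall x : V, ip x x = 0 -> x = 0)].

Definition vnorm (x : V) : R := Num.sqrt (complex.Re (ip x x)).

Definition ip_complete : Prop :=
  forall u : nat -> V,
    (forall e : R, 0 < e -> exists N : nat, forall m n : nat,
        (N <= m)%N -> (N <= n)%N -> vnorm (u m - u n) < e) ->
    exists l : V, forall e : R, 0 < e -> exists N : nat, forall n : nat,
        (N <= n)%N -> vnorm (u n - l) < e.

Definition bounded_op (T : {linear V -> V}) : Prop :=
  exists M : R, forall x : V, vnorm (T x) <= M * vnorm x.

Definition opnorm (T : {linear V -> V}) : R :=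
  sup [set vnorm (T x) | x in [set x : V | vnorm x <= 1]].

Definition is_adjoint (T Ts : {linear V -> V}) : Prop :=
  forall x y : V, ip (T x) y = ip x (Ts y).

Definition positive_op (T : {linear V -> V}) : Prop :=
  forall x : V, 0 <= ip (T x) x.

End HilbertDefs.

From HB Require Import structures.
From mathcomp Require Import all_boot all_order all_algebra.
From mathcomp Require Import all_classical reals.
From mathcomp Require Import complex.
From mathcomp Require Import ring lra.
Set Implicit Arguments. Unset Strict Implicit.
Import Order.TTheory GRing.Theory Num.Theory.
Local Open Scope ring_scope.
Local Open Scope classical_set_scope.
Local Open Scope complex_scope.

(* For positive X with ||X w|| <= m ||w||, polarization gives
   4 Re <X u, v> = <X (u + v), u + v> - <X (u - v), u - v> <= m ||u + v||^2.
   Rotating u so that <X u, v> becomes real and rescaling it to ||u|| = ||v||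
   turns this into the mixed Schwarz inequality
   2 |<X u, v>| <= ||X|| (||u|| ||v|| + |<u, v>|).
   For u = B x and v = A^* y, the projection of u on v bounds the infimum by
   ||u||^2 - |<u, v>|^2 / ||v||^2, and the claim reduces to (a - c)^2 >= 0
   with a = ||u|| ||v||, c = |<u, v>|. *)

(* Without these, [Re] and [Im] would resolve to the numClosedFieldType ones. *)
Local Notation Re := complex.Re.
Local Notation Im := complex.Im.

Section ComplexModulus.
Variable R : realType.
Implicit Types (r : R) (z : R[i]).

Lemma normcRe z : `|z| = (Re `|z|)%:C.
Proof. by rewrite normc_def. Qed.

Lemma Re_norm_ge0 z : 0 <= Re `|z|.
Proof. by rewrite normc_def /= sqrtr_ge0. Qed.

Lemma Re_normM z1 z2 : Re `|z1 * z2| = Re `|z1| * Re `|z2|.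
Proof.
have := normrM z1 z2.
by rewrite normcRe (normcRe z1) (normcRe z2) -rmorphM => /complexI.
Qed.

Lemma Re_norm_real r : 0 <= r -> Re `|r%:C| = r.
Proof. by move=> r_ge0; rewrite ger0_norm ?ler0c. Qed.

Lemma Re_le_norm z : Re z <= Re `|z|.
Proof.
by have := normc_ge_Re z; rewrite normcRe lecR; apply: le_trans (ler_norm _).
Qed.

Lemma sqr_Re_norm z : (Re `|z| ^+ 2)%:C = z * conjc z :> R[i].
Proof. by rewrite -sqr_normc [in RHS]normcRe -rmorphXn. Qed.

Lemma ReD z1 z2 : Re (z1 + z2) = Re z1 + Re z2.
Proof. by case: z1; case: z2. Qed.

Lemma ReJ z : Re (conjc z) = Re z.
Proof. by case: z. Qed.

Lemma ReB z1 z2 : Re (z1 - z2) = Re z1 - Re z2.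
Proof. by case: z1; case: z2. Qed.

Lemma Re_iM z : Re ('i%C * z) = - Im z.
Proof. by case: z => a b; simpc. Qed.

Lemma Re_realM r z : Re (r%:C * z) = r * Re z.
Proof. by case: z => a b; simpc. Qed.

Lemma unit_rotation z : exists2 w : R[i], `|w| = 1 & w * z = `|z|.
Proof.
have [->|z_neq0] := eqVneq z 0; first by exists 1; rewrite ?normr1 ?mulr0 ?normr0.
have nz_neq0 : `|z| != 0 by rewrite normr_eq0.
exists (conjc z / `|z|); first by rewrite normf_div normcJ normr_id divff.
by rewrite mulrAC [conjc z * z]mulrC -sqr_normc expr2 mulfK.
Qed.

End ComplexModulus.

Section InnerProduct.
Variables (R : realType) (V : lmodType R[i]) (ip : V -> V -> R[i]).
Hypothesis Hip : is_inner_product ip.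

Lemma ipC x y : ip x y = conjc (ip y x).
Proof. by case: Hip. Qed.

Let ipDZl a x y z : ip (a *: x + y) z = a * ip x z + ip y z.
Proof. by case: Hip. Qed.

Lemma ip0l z : ip 0 z = 0.
Proof.
have := ipDZl 1 0 0 z; rewrite scaler0 addr0 mul1r => /eqP.
by rewrite -subr_eq0 opprD addrA subrr sub0r oppr_eq0 => /eqP.
Qed.

Lemma ipZl a x z : ip (a *: x) z = a * ip x z.
Proof. by rewrite -[a *: x]addr0 ipDZl ip0l addr0. Qed.

Lemma ipDl x y z : ip (x + y) z = ip x z + ip y z.
Proof. by rewrite -[x in LHS]scale1r ipDZl mul1r. Qed.

Lemma ipBl x y z : ip (x - y) z = ip x z - ip y z.
Proof. by rewrite -scaleN1r ipDl ipZl mulN1r. Qed.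

Lemma ipZr a x z : ip x (a *: z) = conjc a * ip x z.
Proof. by rewrite ipC ipZl rmorphM [ip x z]ipC. Qed.

Lemma ipDr x y z : ip x (y + z) = ip x y + ip x z.
Proof. by rewrite ipC ipDl rmorphD [ip x y]ipC [ip x z]ipC. Qed.

Lemma ipBr x y z : ip x (y - z) = ip x y - ip x z.
Proof. by rewrite ipC ipBl rmorphB [ip x y]ipC [ip x z]ipC. Qed.

Lemma ip0r z : ip z 0 = 0.
Proof. by rewrite ipC ip0l conjc0. Qed.

Lemma ipT_expand (T : {linear V -> V}) a x y :
  ip (T (x + a *: y)) (x + a *: y)
  = ip (T x) x + conjc a * ip (T x) y + a * ip (T y) x + a * conjc a * ip (T y) y.
Proof. rewrite linearD linearZ /= !(ipDl, ipDr, ipZl, ipZr); ring. Qed.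

Lemma ip_polarization (T : {linear V -> V}) x y :
  let E a := ip (T (x + a *: y)) (x + a *: y) in
  E 1 - E (-1) + 'i%C * E 'i%C - 'i%C * E (- 'i%C) = 4%:R * ip (T x) y.
Proof.
have conj_i : conjc 'i%C = - 'i%C :> R[i].
  by apply/eqP; rewrite eq_complex /= oppr0 !eqxx.
have conj_Ni : conjc (- 'i%C) = 'i%C :> R[i].
  by apply/eqP; rewrite eq_complex /= oppr0 opprK !eqxx.
rewrite /= !ipT_expand conj_i conj_Ni rmorph1 rmorphN1.
by move: (sqr_i R) => i2; ring: i2.
Qed.

Lemma vnorm_ge0 w : 0 <= vnorm ip w.
Proof. exact: sqrtr_ge0. Qed.

Lemma ip_vnorm w : ip w w = (vnorm ip w ^+ 2)%:C.
Proof.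
case: Hip => _ _ ip_ge0 _.
by rewrite /vnorm sqr_sqrtr -?ler0c RRe_real ?ger0_real.
Qed.

Lemma Re_ip_vnorm w : Re (ip w w) = vnorm ip w ^+ 2.
Proof. by rewrite ip_vnorm. Qed.

Lemma vnorm0 : vnorm ip 0 = 0.
Proof. by rewrite /vnorm ip0l sqrtr0. Qed.

Lemma vnorm_eq0 w : (vnorm ip w == 0) = (w == 0).
Proof.
apply/eqP/eqP => [w0|->]; last exact: vnorm0.
by case: Hip => _ _ _; apply; rewrite ip_vnorm w0 expr0n.
Qed.

Lemma vnorm_gt0 w : (0 < vnorm ip w) = (w != 0).
Proof. by rewrite lt0r vnorm_eq0 vnorm_ge0 andbT. Qed.

Lemma vnormZ a w : vnorm ip (a *: w) = Re `|a| * vnorm ip w.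
Proof.
rewrite {1}/vnorm ipZl ipZr mulrA -sqr_Re_norm ip_vnorm -rmorphM /=.
by rewrite -exprMn sqrtr_sqr ger0_norm // mulr_ge0 ?Re_norm_ge0 ?vnorm_ge0.
Qed.

Lemma sqr_vnormD x y :
  vnorm ip (x + y) ^+ 2 = vnorm ip x ^+ 2 + vnorm ip y ^+ 2 + 2 * Re (ip x y).
Proof. by rewrite -!Re_ip_vnorm !(ipDl, ipDr) [ip y x]ipC !ReD ReJ; ring. Qed.

Lemma sqr_vnorm_proj x y :
  vnorm ip (x - (ip x y / ip y y) *: y) ^+ 2
  = vnorm ip x ^+ 2 - Re `|ip x y| ^+ 2 / vnorm ip y ^+ 2.
Proof.
have [->|y_neq0] := eqVneq y 0.
  by rewrite ip0r mul0r scale0r subr0 normr0 expr0n /= mul0r subr0.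
have yy_neq0 : ip y y != 0.
  by rewrite ip_vnorm (inj_eq (@complexI R)) expf_neq0 ?vnorm_eq0.
apply: complexI; rewrite -ip_vnorm rmorphB fmorph_div /= sqr_Re_norm -!ip_vnorm.
rewrite ipBl !ipBr !ipZl !ipZr fmorph_div /= -!ipC.
by field.
Qed.

Lemma ipCauchySchwarz x y : Re `|ip x y| <= vnorm ip x * vnorm ip y.
Proof.
have [->|y_neq0] := eqVneq y 0; first by rewrite ip0r normr0 vnorm0 mulr0.
have := sqr_ge0 (vnorm ip (x - (ip x y / ip y y) *: y)).
rewrite sqr_vnorm_proj subr_ge0 ler_pdivrMr ?exprn_gt0 ?vnorm_gt0 // -exprMn.
by rewrite ler_pXn2r ?nnegrE ?mulr_ge0 ?vnorm_ge0 ?Re_norm_ge0.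
Qed.

Lemma inf_dist_sqr_le x y :
  inf [set vnorm ip (x - l *: y) ^+ 2 | l in [set: R[i]]]
  <= vnorm ip x ^+ 2 - Re `|ip x y| ^+ 2 / vnorm ip y ^+ 2.
Proof.
rewrite -sqr_vnorm_proj; apply: ge_inf; last by exists (ip x y / ip y y).
by exists 0 => _ [l _ <-]; exact: sqr_ge0.
Qed.

End InnerProduct.

Section OperatorNorm.
Variables (R : realType) (V : lmodType R[i]) (ip : V -> V -> R[i]).
Hypothesis Hip : is_inner_product ip.
Variable T : {linear V -> V}.
Hypothesis T_bounded : bounded_op ip T.

Let unit_ball_image := [set vnorm ip (T x) | x in [set x : V | vnorm ip x <= 1]].

Let unit_ball_image_ub : has_ubound unit_ball_image.
Proof.
case: T_bounded => M T_le; exists `|M| => _ [x /= x_le1 <-].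
apply: le_trans (T_le x) (le_trans (ler_wpM2r (vnorm_ge0 ip x) (ler_norm M)) _).
by rewrite ler_piMr.
Qed.

Lemma opnorm_ge0 : 0 <= opnorm ip T.
Proof.
apply: (ub_le_sup unit_ball_image_ub).
by exists 0; rewrite /= ?linear0 vnorm0 // ler01.
Qed.

Lemma opnorm_ub w : vnorm ip (T w) <= opnorm ip T * vnorm ip w.
Proof.
have [->|w_neq0] := eqVneq w 0; first by rewrite linear0 !vnorm0 // mulr0.
have w_gt0 : 0 < vnorm ip w by rewrite vnorm_gt0.
set c := (vnorm ip w)^-1%:C.
have Re_c : Re `|c| = (vnorm ip w)^-1 by rewrite Re_norm_real // invr_ge0 ltW.
rewrite -ler_pdivrMr // mulrC -Re_c -vnormZ // -linearZ.
apply: (ub_le_sup unit_ball_image_ub); exists (c *: w) => //=.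
by rewrite vnormZ // Re_c mulVf ?gt_eqF.
Qed.

End OperatorNorm.

Section PositiveOperator.
Variables (R : realType) (V : lmodType R[i]) (ip : V -> V -> R[i]).
Hypothesis Hip : is_inner_product ip.
Variables (X : {linear V -> V}) (m : R).
Hypotheses (X_pos : positive_op ip X) (m_ge0 : 0 <= m).
Hypothesis X_le : forall w, vnorm ip (X w) <= m * vnorm ip w.

Lemma Re_ipX_polar x y :
  4 * Re (ip (X x) y) = Re (ip (X (x + y)) (x + y)) - Re (ip (X (x - y)) (x - y)).
Proof.
have := congr1 (@complex.Re R) (ip_polarization Hip X x y).
rewrite /= scale1r scaleN1r !(ReB, ReD) !Re_iM !ger0_Im ?X_pos //.
rewrite oppr0 addr0 subr0 => ->.
by rewrite -(rmorph_nat (real_complex R) 4) Re_realM.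
Qed.

Lemma Re_ipX_le w : Re (ip (X w) w) <= m * vnorm ip w ^+ 2.
Proof.
apply: le_trans (Re_le_norm _) (le_trans (ipCauchySchwarz Hip _ _) _).
by rewrite expr2 mulrA ler_wpM2r ?vnorm_ge0.
Qed.

Lemma Re_ipX_le_sqr_vnormD x y : 4 * Re (ip (X x) y) <= m * vnorm ip (x + y) ^+ 2.
Proof.
rewrite Re_ipX_polar; apply: le_trans (Re_ipX_le _).
by have := X_pos (x - y); rewrite lecE gerDl oppr_le0 => /andP[].
Qed.

Lemma ipX_mixed_CauchySchwarz u v :
  2 * Re `|ip (X u) v| <= m * (vnorm ip u * vnorm ip v + Re `|ip u v|).
Proof.
set z := ip (X u) v.
have [z0|z_neq0] := eqVneq z 0.
  by rewrite z0 normr0 /= mulr0 mulr_ge0 // addr_ge0 ?mulr_ge0 ?vnorm_ge0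
    ?Re_norm_ge0.
have u_gt0 : 0 < vnorm ip u.
  rewrite vnorm_gt0 //; apply: contra_neq _ z_neq0 => u0.
  by rewrite /z u0 linear0 ip0l.
have v_gt0 : 0 < vnorm ip v.
  rewrite vnorm_gt0 //; apply: contra_neq _ z_neq0 => v0.
  by rewrite /z v0 ip0r.
set s := vnorm ip v / vnorm ip u.
have s_gt0 : 0 < s by rewrite divr_gt0.
have [w w1 wz] := unit_rotation z.
have Re_sw : Re `|s%:C * w| = s by rewrite Re_normM w1 Re_norm_real ?ltW //= mulr1.
(* Rotating and rescaling u makes <X u', v> = s |<X u, v>| with ||u'|| = ||v||. *)
set u' := (s%:C * w) *: u.
have Re_ipXu' : Re (ip (X u') v) = s * Re `|z|.
  by rewrite /u' linearZ /= ipZl // -mulrA wz Re_realM.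
have vnorm_u' : vnorm ip u' = vnorm ip v by rewrite vnormZ // Re_sw mulfVK ?gt_eqF.
have Re_ipu' : m * Re (ip u' v) <= m * (s * Re `|ip u v|).
  rewrite ler_wpM2l // ipZl //; apply: le_trans (Re_le_norm _) _.
  by rewrite Re_normM Re_sw.
have := Re_ipX_le_sqr_vnormD u' v.
rewrite sqr_vnormD // vnorm_u' Re_ipXu' => polar.
have two_s_gt0 : 0 < 2 * s by rewrite mulr_gt0.
rewrite -(ler_pM2l two_s_gt0).
have -> : 2 * s * (m * (vnorm ip u * vnorm ip v + Re `|ip u v|))
  = m * (vnorm ip v ^+ 2 + vnorm ip v ^+ 2) + 2 * (m * (s * Re `|ip u v|)).
  by rewrite /s; field; rewrite gt_eqF.
lra.
Qed.

End PositiveOperator.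

Lemma mixed_Schwarz_refinement (R : realFieldType) (m p r c z d : R) :
  0 <= m -> 0 < p -> 0 <= r -> 0 <= c -> c <= p * r ->
  2 * z <= m * (p * r + c) -> d <= p ^+ 2 - c ^+ 2 / r ^+ 2 ->
  z <= m / 2 * (2 * p * r - d / (2 * p) * r).
Proof.
move=> m_ge0 p_gt0 r_ge0 c_ge0 c_le z_le d_le.
have [r0|r_gt0] := eqVneq r 0.
  move: c_le z_le; rewrite r0 !mulr0 subr0 mulr0 => c_le z_le.
  have c0 : c = 0 by apply/eqP; rewrite eq_le c_le c_ge0.
  by move: z_le; rewrite c0 addr0 mulr0; lra.
have {r_gt0}r_gt0 : 0 < r by rewrite lt0r r_gt0.
set a := p * r in c_le z_le *.
have a_gt0 : 0 < a by rewrite mulr_gt0.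
have dr_le : d / (2 * p) * r <= (a ^+ 2 - c ^+ 2) / (2 * a).
  have -> : (a ^+ 2 - c ^+ 2) / (2 * a) = (p ^+ 2 - c ^+ 2 / r ^+ 2) / (2 * p) * r.
    by rewrite /a; field; rewrite !gt_eqF.
  apply: ler_wpM2r; first exact: ltW.
  by apply: ler_wpM2r; rewrite // invr_ge0 mulr_ge0 // ltW.
have gap : m / 2 * (2 * a - (a ^+ 2 - c ^+ 2) / (2 * a))
    = m * (a + c) / 2 + m * (a - c) ^+ 2 / (4 * a).
  by field; rewrite gt_eqF.
have gap_ge0 : 0 <= m * (a - c) ^+ 2 / (4 * a).
  apply: divr_ge0; first by rewrite mulr_ge0 ?sqr_ge0.
  by rewrite ltW // mulr_gt0.
rewrite -[2 * p * r]mulrA -/a.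
apply: le_trans _ (ler_wpM2l _ (lerB (lexx _) dr_le)); last by rewrite divr_ge0.
by rewrite gap; lra.
Qed.

Theorem lemma2p7 (R : realType) (V : lmodType R[i]) (ip : V -> V -> R[i])
  (Hip : is_inner_product ip) (Hcomplete : ip_complete ip)
  (A X B Astar : {linear V -> V})
  (hA : bounded_op ip A) (hX : bounded_op ip X) (hB : bounded_op ip B)
  (hAstar : is_adjoint ip A Astar) (hXpos : positive_op ip X)
  (x y : V) (hBx : B x != 0) :
  complex.Re `|ip (A (X (B x))) y| <=
    opnorm ip X / 2 *
      (2 * vnorm ip (B x) * vnorm ip (Astar y)
       - inf [set (vnorm ip (B x - l *: Astar y)) ^+ 2 | l in [set: R[i]]]
           / (2 * vnorm ip (B x)) * vnorm ip (Astar y)).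
Proof.
rewrite hAstar.
apply: (mixed_Schwarz_refinement (c := Re `|ip (B x) (Astar y)|)).
- exact (opnorm_ge0 Hip hX).
- by rewrite vnorm_gt0.
- exact: vnorm_ge0.
- exact: Re_norm_ge0.
- exact: ipCauchySchwarz.
- exact: ipX_mixed_CauchySchwarz hXpos (opnorm_ge0 Hip hX) (opnorm_ub Hip hX) _ _.
- exact: inf_dist_sqr_le.
Qed.
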